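(* Let $\mathbf{k}$ be a field, $\sigma\subset N_{\mathbb{Q}}$ a nonzero strongly convex polyhedral cone, and $\partial$ a nontrivial homogeneous LFIHD of degree $e$ on $A=\mathbf{k}[\sigma^\vee\cap M]$. Then: (i) there is a ray $\rho$ of $\sigma$ such that $\ker\partial=\mathbf{k}[\rho^\star\cap M]$, where $\rho^\star=\{m\in\sigma^\vee:\langle m,\rho\rangle=0\}$; (ii) $e$ is a Demazure root of $\sigma$ with distinguished ray $\rho$.
   Context: An LFIHD (locally finite iterative higher derivation) on a $\mathbf{k}$-algebra $A$ is a sequence $\partial=(\partial^{(i)})_{i\in\mathbb{N}}$ of $\mathbf{k}$-linear maps $A\to A$ with $\partial^{(0)}=\mathrm{id}$, $\partial^{(i)}(fg)=\sum_{j=0}^i\partial^{(j)}(f)\partial^{(i-j)}(g)$, for each $f$ there is $r$ with $\partial^{(i)}(f)=0$ for $i\ge r$, and $\partial^{(i)}\circ\partial^{(j)}=\binom{i+j}{i}\partial^{(i+j)}$. Its kernel is $\{f:\partial^{(i)}(f)=0\ \forall i>0\}$; it is trivial if the kernel is $A$. For an $M$-graded $A$, $\partial$ is homogeneous of degree $e\in M$ if $\partial^{(i)}(A_m)\subset A_{m+ie}$ for all $i,m$. A ray of $\sigma$ is identified with its primitive lattice vector in $N$. A Demazure root of $\sigma$ is $e\in M$ such that there is a ray $\rho$ of $\sigma$ with $\langle e,\rho\rangle=-1$ and $\langle e,\rho'\rangle\ge0$ for every other ray $\rho'$; $\rho$ is its distinguished ray. *)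

From HB Require Import structures.
From mathcomp Require Import all_boot all_order all_algebra.
Set Implicit Arguments. Unset Strict Implicit. Unset Printing Implicit Defensive.
Import Order.TTheory GRing.Theory Num.Theory.
Local Open Scope ring_scope.

(* Lattices N = M = Z^n (row vectors), N_Q = M_Q = Q^n, pairing = dot product. *)
Definition lat n := 'rV[int]_n.
Definition latQ n := 'rV[rat]_n.
Definition toQ n (v : lat n) : latQ n := map_mx (fun z : int => z%:~R) v.

Definition pairQ n (u v : latQ n) : rat := \sum_(i < n) u 0 i * v 0 i.
Definition pairZ n (m v : lat n) : int := \sum_(i < n) m 0 i * v 0 i.

Definition in_cone n (gens : seq (lat n)) (v : latQ n) : Prop :=
  exists lam : 'I_(size gens) -> rat,
    (forall i, 0 <= lam i) /\
    v = \sum_(i < size gens) lam i *: toQ (nth 0 gens i).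

Definition strongly_convex n (gens : seq (lat n)) : Prop :=
  forall v, in_cone gens v -> in_cone gens (- v) -> v = 0.

Definition nonzero_cone n (gens : seq (lat n)) : Prop :=
  exists v, in_cone gens v /\ v != 0.

Definition in_dualQ n (gens : seq (lat n)) (u : latQ n) : Prop :=
  forall v, in_cone gens v -> 0 <= pairQ u v.
Definition in_dualM n (gens : seq (lat n)) (m : lat n) : Prop :=
  in_dualQ gens (toQ m).

Definition primitive n (r : lat n) : Prop :=
  forall (d : int) (v : lat n), r = d *: v -> d = 1 \/ d = -1.

(* rho is (the primitive lattice vector of) a ray of sigma: Q_{>=0} rho is a
   one-dimensional face sigma ∩ u^perp with u in sigma^vee. *)
Definition is_ray n (gens : seq (lat n)) (rho : lat n) : Prop :=
  primitive rho /\
  exists u, in_dualQ gens u /\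
    forall v, (in_cone gens v /\ pairQ u v = 0) <->
              exists t : rat, 0 <= t /\ v = t *: toQ rho.

Definition demazure_root_with n (gens : seq (lat n)) (e rho : lat n) : Prop :=
  is_ray gens rho /\ pairZ e rho = -1 /\
  forall rho', is_ray gens rho' -> rho' <> rho -> 0 <= pairZ e rho'.

(* A together with chi : M -> A is the semigroup algebra k[sigma^vee ∩ M]:
   (chi m)_{m in sigma^vee ∩ M} is a k-basis of A, chi 0 = 1 and
   chi (m + m') = chi m * chi m'. (Values of chi off sigma^vee ∩ M are irrelevant.) *)
Definition is_semigroup_algebra (k : fieldType) (A : comAlgType k) n
    (S : lat n -> Prop) (chi : lat n -> A) : Prop :=
  [/\ chi 0 = 1,
      (forall m m', S m -> S m' -> chi (m + m') = chi m * chi m'),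
      (forall f : A, exists (s : seq (lat n)) (c : lat n -> k),
           (forall m, m \in s -> S m) /\ f = \sum_(m <- s) c m *: chi m) &
      (forall (s : seq (lat n)) (c : lat n -> k), uniq s ->
           (forall m, m \in s -> S m) ->
           \sum_(m <- s) c m *: chi m = 0 -> forall m, m \in s -> c m = 0)].

Definition in_piece (k : fieldType) (A : comAlgType k) n
    (S : lat n -> Prop) (chi : lat n -> A) (m : lat n) (f : A) : Prop :=
  (S m /\ exists c : k, f = c *: chi m) \/ (~ S m /\ f = 0).

Definition is_LFIHD (k : fieldType) (A : comAlgType k) (D : nat -> A -> A) : Prop :=
  [/\ (forall i (a : k) (f g : A), D i (a *: f + g) = a *: D i f + D i g),
      (forall f, D 0%N f = f),
      (forall i f g, D i (f * g) = \sum_(j < i.+1) D j f * D (i - j)%N g),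
      (forall f, exists r, forall i, (r <= i)%N -> D i f = 0) &
      (forall i j f, D i (D j f) = D (i + j)%N f *+ 'C(i + j, i))].

Definition in_kernel (k : fieldType) (A : comAlgType k) (D : nat -> A -> A) (f : A) :=
  forall i, (0 < i)%N -> D i f = 0.

Definition trivial_LFIHD (k : fieldType) (A : comAlgType k) (D : nat -> A -> A) :=
  forall f, in_kernel D f.

Definition homogeneous_of_degree (k : fieldType) (A : comAlgType k) n
    (S : lat n -> Prop) (chi : lat n -> A) (D : nat -> A -> A) (e : lat n) :=
  forall i m f, in_piece S chi m f -> in_piece S chi (m + e *+ i) (D i f).

Definition in_face_algebra (k : fieldType) (A : comAlgType k) n
    (gens : seq (lat n)) (chi : lat n -> A) (rho : lat n) (f : A) : Prop :=
  exists (s : seq (lat n)) (c : lat n -> k),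
    (forall m, m \in s -> in_dualM gens m /\ pairZ m rho = 0) /\
    f = \sum_(m <- s) c m *: chi m.

From HB Require Import structures.
From mathcomp Require Import all_boot all_order all_algebra.
From mathcomp Require Import ring lra zify.
From Stdlib Require Import ClassicalEpsilon Classical.
Set Implicit Arguments. Unset Strict Implicit. Unset Printing Implicit Defensive.
Import Order.TTheory GRing.Theory Num.Theory.
Local Open Scope ring_scope.

(* Write S = sigma^vee ∩ M.  A homogeneous LFIHD D of degree e acts on the
   characters by D i (chi m) = c_i(m) chi (m + i e).  The Leibniz rule makes
   the generating polynomial sum_i c_i(m) X^i multiplicative in m, so its
   degree ddeg : S -> nat is additive; iterativity shows that the top
   derivative chi (m + ddeg m e) has degree 0.  An additive map S -> nat
   extends to a linear functional, so ddeg m = <m, v> for some v in N.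
   Then <e, v> = -1, and by biduality v lies in sigma and the twist
   w |-> w + <e, w> v maps sigma into itself; with a Gordan interior point
   m0 of sigma^vee this shows that Q_{>=0} v is a ray, that every other ray
   pairs nonnegatively with e, and ker D = span (chi m : ddeg m = 0) is the
   face algebra of v. *)

Section RationalPairing.
Variable n : nat.
Implicit Types u v w : latQ n.

Lemma pairQC u v : pairQ u v = pairQ v u.
Proof. by apply: eq_bigr => i _; rewrite mulrC. Qed.

Lemma pairQDl u v w : pairQ (u + v) w = pairQ u w + pairQ v w.
Proof. by rewrite /pairQ -big_split; apply: eq_bigr => i _; rewrite mxE mulrDl. Qed.

Lemma pairQZl (a : rat) u w : pairQ (a *: u) w = a * pairQ u w.
Proof. by rewrite /pairQ mulr_sumr; apply: eq_bigr => i _; rewrite mxE mulrA. Qed.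

Lemma pairQNl u w : pairQ (- u) w = - pairQ u w.
Proof. by rewrite -scaleN1r pairQZl mulN1r. Qed.

Lemma pairQBl u v w : pairQ (u - v) w = pairQ u w - pairQ v w.
Proof. by rewrite pairQDl pairQNl. Qed.

Lemma pairQ0l w : pairQ 0 w = 0.
Proof. by rewrite -(scale0r (0 : latQ n)) pairQZl mul0r. Qed.

Lemma pairQMnl u w j : pairQ (u *+ j) w = pairQ u w *+ j.
Proof. by rewrite -scaler_nat pairQZl mulr_natl. Qed.

Lemma pairQDr u v w : pairQ w (u + v) = pairQ w u + pairQ w v.
Proof. by rewrite !(pairQC w) pairQDl. Qed.

Lemma pairQZr (a : rat) u w : pairQ w (a *: u) = a * pairQ w u.
Proof. by rewrite !(pairQC w) pairQZl. Qed.

Lemma pairQNr u w : pairQ w (- u) = - pairQ w u.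
Proof. by rewrite !(pairQC w) pairQNl. Qed.

Lemma pairQBr u v w : pairQ w (u - v) = pairQ w u - pairQ w v.
Proof. by rewrite !(pairQC w) pairQBl. Qed.

Lemma pairQ0r w : pairQ w 0 = 0.
Proof. by rewrite pairQC pairQ0l. Qed.

Lemma pairQ_gt0 u : u != 0 -> 0 < pairQ u u.
Proof.
move=> nz; have [i Hi] : exists i, u 0 i != 0.
  apply/existsP; apply: contraR nz => /existsPn H; apply/eqP/matrixP => a j.
  by rewrite (ord1 a) mxE; apply/eqP; move: (H j); rewrite negbK.
rewrite /pairQ (bigD1 i) //=.
have sum_ge0 : 0 <= \sum_(j < n | j != i) u 0 j * u 0 j.
  by apply: sumr_ge0 => j _; rewrite -expr2 sqr_ge0.
have sq_gt0 : 0 < u 0 i * u 0 i by rewrite -expr2 exprn_even_gt0.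
by apply: (lt_le_trans sq_gt0); rewrite lerDl.
Qed.
End RationalPairing.

(* The recursive form (peel off one generator at a time) is what makes the
   inductive proof of Farkas' lemma below convenient. *)
Fixpoint nonneg_comb n (gs : seq (latQ n)) (b : latQ n) : Prop :=
  match gs with
  | [::] => b = 0
  | a :: gs' => exists t : rat, 0 <= t /\ nonneg_comb gs' (b - t *: a)
  end.

Definition farkas_alternative n (gs : seq (latQ n)) (b : latQ n) : Prop :=
  nonneg_comb gs b \/
  exists y, (forall g, g \in gs -> 0 <= pairQ y g) /\ pairQ y b < 0.

Section FiniteCones.
Variable n : nat.
Implicit Types (gs : seq (latQ n)) (u x y a b : latQ n).

Lemma nonneg_comb0 gs : nonneg_comb gs 0.
Proof. by elim: gs => [|a gs IH] //=; exists 0; rewrite scale0r subr0. Qed.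

Lemma nonneg_comb_mem gs a : a \in gs -> nonneg_comb gs a.
Proof.
elim: gs => [|x gs IH] //=; rewrite inE => /orP [/eqP->|H].
  by exists 1; rewrite scale1r subrr; split; [exact: ler01|exact: nonneg_comb0].
by exists 0; rewrite scale0r subr0; split; [exact: lexx|exact: IH].
Qed.

Lemma nonneg_combZ gs c x : 0 <= c -> nonneg_comb gs x -> nonneg_comb gs (c *: x).
Proof.
elim: gs x => [|a gs IH] x c_ge0 /=; first by move=> ->; rewrite scaler0.
move=> [t [t_ge0 cx]]; exists (c * t); split; first exact: mulr_ge0.
by rewrite -scalerA -scalerBr; apply: IH.
Qed.

Lemma nonneg_comb_pair gs u x :
  (forall g, g \in gs -> 0 <= pairQ u g) -> nonneg_comb gs x -> 0 <= pairQ u x.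
Proof.
elim: gs x => [|a gs IH] x /= u_ge0; first by move=> ->; rewrite pairQ0r.
move=> [t [t_ge0 cx]]; have -> : x = (x - t *: a) + t *: a by rewrite subrK.
rewrite pairQDr pairQZr addr_ge0 //.
  by apply: IH => // g g_gs; apply: u_ge0; rewrite inE g_gs orbT.
by rewrite mulr_ge0 // u_ge0 // inE eqxx.
Qed.

Lemma nonneg_comb_shear gs a (phi : latQ n -> rat) x :
  (forall g, g \in gs -> phi g <= 0) ->
  nonneg_comb (map (fun g => g - phi g *: a) gs) x ->
  exists c, 0 <= c /\ nonneg_comb gs (x - c *: a).
Proof.
elim: gs x => [|g gs IH] x /= phi_le0.
  by move=> ->; exists 0; rewrite scale0r subr0 lexx.
move=> [t [t_ge0 cx]].
have phi_le0' : forall g', g' \in gs -> phi g' <= 0.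
  by move=> g' g'_gs; apply: phi_le0; rewrite inE g'_gs orbT.
have [c [c_ge0 cx']] := IH _ phi_le0' cx.
have phig : phi g <= 0 by apply: phi_le0; rewrite inE eqxx.
exists (c - t * phi g); split.
  by rewrite subr_ge0; apply: (le_trans _ c_ge0); rewrite mulr_ge0_le0.
exists t; split => //.
have -> : x - (c - t * phi g) *: a - t *: g = x - t *: (g - phi g *: a) - c *: a.
  by apply/matrixP => i j; rewrite !mxE; ring.
exact: cx'.
Qed.

(* Inductive step of Farkas' lemma when the current certificate y is
   negative on the new generator a: shear the other generators along a so
   that y vanishes on them, and lift the alternative for the sheared data. *)
Lemma farkas_shear gs a b y :
  (forall g, g \in gs -> 0 <= pairQ y g) -> pairQ y b < 0 -> pairQ y a < 0 ->
  let h := fun g => g - (pairQ y g / pairQ y a) *: a in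
  farkas_alternative (map h gs) (h b) -> farkas_alternative (a :: gs) b.
Proof.
move=> y_ge0 yb ya h.
set phi := fun g => pairQ y g / pairQ y a.
have phi_le0 : forall g, g \in gs -> phi g <= 0.
  by move=> g g_gs; rewrite /phi mulr_ge0_le0 ?y_ge0 // invr_le0 ltW.
have ya_nz : pairQ y a != 0 by rewrite lt_eqF.
case=> [cb|[z [z_ge0 zb]]].
  have [c [c_ge0 cb']] := nonneg_comb_shear phi_le0 cb.
  left; exists (phi b + c); split.
    by apply: addr_ge0 => //; apply: ltW; rewrite /phi nmulr_rgt0 ?invr_lt0.
  have -> : b - (phi b + c) *: a = h b - c *: a.
    by rewrite /h /phi; apply/matrixP => i j; rewrite !mxE; ring.
  exact: cb'.
pose z' := z - (pairQ z a / pairQ y a) *: y.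
have z'_h g : pairQ z' g = pairQ z (h g).
  by rewrite /z' /h pairQBl pairQZl pairQBr pairQZr; ring.
right; exists z'; split; last by rewrite z'_h.
move=> g; rewrite inE => /orP [/eqP->|g_gs].
  by rewrite /z' pairQBl pairQZl divfK // subrr.
by rewrite z'_h; apply: z_ge0; apply: map_f.
Qed.

Lemma farkas gs b : farkas_alternative gs b.
Proof.
move: {2}(size gs) (erefl (size gs)) => s; elim: s gs b => [|s IH] [|a gs] b //=.
  move=> _; case: (eqVneq b 0) => [->|nz]; first by left.
  by right; exists (- b); split => //; rewrite pairQNl oppr_lt0 pairQ_gt0.
case=> size_gs.
case: (IH gs b size_gs) => [cb|[y [y_ge0 yb]]].
  by left; exists 0; rewrite scale0r subr0; split.
case: (leP 0 (pairQ y a)) => ya.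
  right; exists y; split => // g; rewrite inE => /orP[/eqP->|]//; exact: y_ge0.
by apply: (farkas_shear y_ge0 yb ya); apply: IH; rewrite size_map.
Qed.
End FiniteCones.

Lemma in_cone_comb n (gens : seq (lat n)) v :
  in_cone gens v <-> nonneg_comb (map (@toQ n) gens) v.
Proof.
split.
  elim: gens v => [|g gs IH] v [lam [lam_ge0 ->]] /=; first by rewrite big_ord0.
  exists (lam ord0); split => //.
  rewrite big_ord_recl /= addrAC subrr add0r; apply: IH.
  by exists (fun i => lam (lift ord0 i)); split.
elim: gens v => [|g gs IH] v /=.
  by move=> ->; exists (fun i => 0); split => //; rewrite big_ord0.
move=> [t [t_ge0 /IH [lam [lam_ge0 lamE]]]].
exists (fun i : 'I_(size gs).+1 => if unlift ord0 i is Some j then lam j else t).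
split; first by move=> i; case: unliftP.
rewrite big_ord_recl unlift_none /=.
under eq_bigr => i _ do rewrite liftK.
by rewrite -lamE addrC subrK.
Qed.

Section Lattice.
Variable n : nat.
Implicit Types (m g a b : lat n) (u : latQ n) (gens : seq (lat n)).

Lemma toQD a b : toQ (a + b) = toQ a + toQ b.
Proof. by apply/matrixP => i j; rewrite !mxE intrD. Qed.

Lemma toQZ (z : int) a : toQ (z *: a) = z%:~R *: toQ a.
Proof. by apply/matrixP => i j; rewrite !mxE intrM. Qed.

Lemma toQ0 : toQ (0 : lat n) = 0.
Proof. by apply/matrixP => i j; rewrite !mxE. Qed.

Lemma toQMn a j : toQ (a *+ j) = toQ a *+ j.
Proof. by elim: j => [|j IH]; [rewrite !mulr0n toQ0|rewrite !mulrS toQD IH]. Qed.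

Lemma toQ_inj : injective (@toQ n).
Proof.
move=> a b eq_ab; apply/matrixP => i j.
by have := congr1 (fun M : latQ n => M i j) eq_ab; rewrite !mxE => /intr_inj.
Qed.

Lemma toQ_eq0 a : (toQ a == 0) = (a == 0).
Proof. by rewrite -toQ0 (inj_eq toQ_inj). Qed.

Lemma pairQ_toQ a b : pairQ (toQ a) (toQ b) = (pairZ a b)%:~R.
Proof.
rewrite /pairQ /pairZ rmorph_sum.
by apply: eq_bigr => i _; rewrite !mxE rmorphM.
Qed.

Lemma pairZC a b : pairZ a b = pairZ b a.
Proof. by apply: eq_bigr => i _; rewrite mulrC. Qed.

Lemma pairZDl a b g : pairZ (a + b) g = pairZ a g + pairZ b g.
Proof. by rewrite /pairZ -big_split; apply: eq_bigr => i _; rewrite mxE mulrDl. Qed.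

Lemma pairZZl (z : int) a g : pairZ (z *: a) g = z * pairZ a g.
Proof. by rewrite /pairZ mulr_sumr; apply: eq_bigr => i _; rewrite mxE mulrA. Qed.

Lemma pairZ0l g : pairZ 0 g = 0.
Proof. by rewrite -(scale0r (0 : lat n)) pairZZl mul0r. Qed.

Lemma pairZMnl a j g : pairZ (a *+ j) g = pairZ a g *+ j.
Proof. by rewrite -scaler_nat pairZZl mulr_natl. Qed.

Lemma pairZZr (z : int) a g : pairZ g (z *: a) = z * pairZ g a.
Proof. by rewrite !(pairZC g) pairZZl. Qed.

Lemma pairZ0r g : pairZ g 0 = 0.
Proof. by rewrite pairZC pairZ0l. Qed.

Lemma in_cone_gen gens g : g \in gens -> in_cone gens (toQ g).
Proof. by move=> g_gens; apply/in_cone_comb/nonneg_comb_mem/map_f. Qed.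

Lemma in_dualQ_gens gens u :
  in_dualQ gens u <-> forall g, g \in gens -> 0 <= pairQ u (toQ g).
Proof.
split => [u_dual g /in_cone_gen|u_ge0 v /in_cone_comb]; first exact: u_dual.
by apply: nonneg_comb_pair => _ /mapP [g g_gens ->]; exact: u_ge0.
Qed.

Lemma in_dualM_gens gens m :
  in_dualM gens m <-> forall g, g \in gens -> 0 <= pairZ m g.
Proof.
rewrite /in_dualM in_dualQ_gens.
by split => m_ge0 g g_gens; have := m_ge0 g g_gens; rewrite pairQ_toQ ler0z.
Qed.

Lemma in_dualM0 gens : in_dualM gens 0.
Proof. by apply/in_dualM_gens => g _; rewrite pairZ0l. Qed.

Lemma in_dualMD gens m m' :
  in_dualM gens m -> in_dualM gens m' -> in_dualM gens (m + m').
Proof.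
move=> /in_dualM_gens m_ge0 /in_dualM_gens m'_ge0; apply/in_dualM_gens => g g_gens.
by rewrite pairZDl addr_ge0 ?m_ge0 ?m'_ge0.
Qed.

Lemma in_dualMMn gens m j : in_dualM gens m -> in_dualM gens (m *+ j).
Proof.
move=> m_dual; elim: j => [|j IH]; first by rewrite mulr0n; exact: in_dualM0.
by rewrite mulrS; apply: in_dualMD.
Qed.

Lemma clear_denominators u :
  exists (N : int) (m : lat n), 0 < N /\ toQ m = N%:~R *: u.
Proof.
pose N := \prod_(i < n) denq (u 0 i).
exists N, (\row_i (numq (u 0 i) * \prod_(j < n | j != i) denq (u 0 j))).
split; first by apply: prodr_gt0 => i _; exact: denq_gt0.
apply/matrixP => a i; rewrite (ord1 a) !mxE.
by rewrite /N [\prod_(j < n) _](bigD1 i) //= !intrM numqE; ring.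
Qed.

Lemma integral_dual gens y : in_dualQ gens y ->
  exists (N : int) (m : lat n), [/\ 0 < N, in_dualM gens m &
    forall x, pairQ (toQ m) x = N%:~R * pairQ y x].
Proof.
move=> y_dual; have [N [m [N_gt0 mE]]] := clear_denominators y.
exists N, m; split => //; last by move=> x; rewrite mE pairQZl.
move=> v v_cone; rewrite mE pairQZl mulr_ge0 ?y_dual //.
by rewrite ler0z ltW.
Qed.
End Lattice.

Section ConeDuality.
Variables (n : nat) (gens : seq (lat n)).
Implicit Types (m g : lat n) (u x w : latQ n).

Lemma in_coneZ c x : 0 <= c -> in_cone gens x -> in_cone gens (c *: x).
Proof. by move=> c_ge0 /in_cone_comb cx; apply/in_cone_comb/nonneg_combZ. Qed.

Lemma dual_dual x : (forall m, in_dualM gens m -> 0 <= pairQ (toQ m) x) ->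
  in_cone gens x.
Proof.
move=> x_ge0; case: (farkas (map (@toQ n) gens) x) => [cx|[y [y_ge0 yx]]].
  exact/in_cone_comb.
have y_dual : in_dualQ gens y.
  by apply/in_dualQ_gens => g g_gens; apply/y_ge0/map_f.
have [N [m [N_gt0 m_dual mE]]] := integral_dual y_dual.
have := x_ge0 m m_dual; rewrite mE pmulr_rge0 ?ltr0z //.
by rewrite leNgt yx.
Qed.

Hypothesis sc : strongly_convex gens.

Lemma dual_pos_at g : g \in gens -> g != 0 ->
  exists y, in_dualQ gens y /\ 0 < pairQ y (toQ g).
Proof.
move=> g_gens g_nz.
case: (farkas (map (@toQ n) gens) (- toQ g)) => [cg|[y [y_ge0 yg]]].
  have := sc (in_cone_gen g_gens) (proj2 (in_cone_comb _ _) cg).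
  by move/eqP; rewrite toQ_eq0 (negbTE g_nz).
exists y; split; last by rewrite -oppr_lt0 -pairQNr.
by apply/in_dualQ_gens => g' g'_gens; apply/y_ge0/map_f.
Qed.

Lemma dual_pos_on (l : seq (lat n)) : exists y, in_dualQ gens y /\
  forall g, g \in l -> g \in gens -> g != 0 -> 0 < pairQ y (toQ g).
Proof.
elim: l => [|g l [y [y_dual y_pos]]].
  by exists 0; split => // v _; rewrite pairQ0l.
have [/andP [g_gens g_nz]|g_triv] := boolP ((g \in gens) && (g != 0)); last first.
  exists y; split => // g'; rewrite inE => /orP [/eqP ->|]; last exact: y_pos.
  by move=> g'_gens g'_nz; move: g_triv; rewrite g'_gens g'_nz.
have [y' [y'_dual y'g]] := dual_pos_at g_gens g_nz.
exists (y + y'); split.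
  by move=> v v_cone; rewrite pairQDl addr_ge0 // ?y_dual ?y'_dual.
move=> g'; rewrite pairQDl inE => /orP [/eqP -> _ _|g'_l g'_gens g'_nz].
  by rewrite ltr_wpDl //; apply/y_dual/in_cone_gen.
by rewrite ltr_wpDr ?y_pos //; apply/y'_dual/in_cone_gen.
Qed.

Lemma gordan : exists m0, in_dualM gens m0 /\
  forall g, g \in gens -> g != 0 -> 0 < pairZ m0 g.
Proof.
have [y [y_dual y_pos]] := dual_pos_on gens.
have [N [m [N_gt0 m_dual mE]]] := integral_dual y_dual.
exists m; split => // g g_gens g_nz.
by rewrite -(ltr0z rat) -pairQ_toQ mE mulr_gt0 ?ltr0z ?y_pos.
Qed.
End ConeDuality.

Lemma nonneg_comb_zero n (gs : seq (latQ n)) u x :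
  (forall a, a \in gs -> 0 <= pairQ u a /\ (a != 0 -> 0 < pairQ u a)) ->
  nonneg_comb gs x -> pairQ u x = 0 -> x = 0.
Proof.
elim: gs x => [|a gs IH] x /= u_pos; first by move=> ->.
move=> [t [t_ge0 cx]] ux0.
have [ua_ge0 ua_gt0] := u_pos a (mem_head _ _).
have u_pos' a' : a' \in gs -> 0 <= pairQ u a' /\ (a' != 0 -> 0 < pairQ u a').
  by move=> a'_gs; apply: u_pos; rewrite inE a'_gs orbT.
have rest_ge0 : 0 <= pairQ u (x - t *: a).
  by apply: nonneg_comb_pair cx => a' /u_pos' [].
have ta_ge0 : 0 <= t * pairQ u a by apply: mulr_ge0.
have split_ux : pairQ u x = pairQ u (x - t *: a) + t * pairQ u a.
  by rewrite pairQBr pairQZr subrK.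
have rest0 : pairQ u (x - t *: a) = 0 by lra.
have ta0 : t * pairQ u a = 0 by lra.
have /eqP := IH _ u_pos' cx rest0; rewrite subr_eq0 => /eqP ->.
have [->|a_nz] := eqVneq a 0; first by rewrite scaler0.
move/eqP: ta0; rewrite mulf_eq0 => /orP [/eqP ->|]; first by rewrite scale0r.
by rewrite gt_eqF // ua_gt0.
Qed.

Lemma cone_zero n (gens : seq (lat n)) m0 x :
  in_dualM gens m0 -> (forall g, g \in gens -> g != 0 -> 0 < pairZ m0 g) ->
  in_cone gens x -> pairQ (toQ m0) x = 0 -> x = 0.
Proof.
move=> m0_dual m0_pos /in_cone_comb cx.
apply: nonneg_comb_zero cx => _ /mapP [g g_gens ->]; split.
  exact/m0_dual/in_cone_gen.
by rewrite toQ_eq0 pairQ_toQ ltr0z; apply: m0_pos.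
Qed.

Section HomogeneousLFIHD.
Variables (k : fieldType) (n : nat) (gens : seq (lat n)) (A : comAlgType k)
  (chi : lat n -> A) (D : nat -> A -> A) (e : lat n).
Local Notation S := (in_dualM gens).
Hypothesis chi_basis : is_semigroup_algebra S chi.
Hypothesis D_LFIHD : is_LFIHD D.
Hypothesis D_hom : homogeneous_of_degree S chi D e.

Lemma D_add i f g : D i (f + g) = D i f + D i g.
Proof. by case: D_LFIHD => D_lin _ _ _ _; have := D_lin i 1 f g; rewrite !scale1r. Qed.

Lemma D_0 i : D i 0 = 0.
Proof. by apply: (addrI (D i 0)); rewrite -D_add !addr0. Qed.

Lemma D_scale i a f : D i (a *: f) = a *: D i f.
Proof.
by case: D_LFIHD => D_lin _ _ _ _; have := D_lin i a f 0; rewrite !addr0 D_0 addr0.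
Qed.

Lemma D_sum i (s : seq (lat n)) (F : lat n -> A) :
  D i (\sum_(m <- s) F m) = \sum_(m <- s) D i (F m).
Proof. by elim: s => [|x s IH]; rewrite ?big_nil ?D_0 // !big_cons D_add IH. Qed.

Lemma chi_free (s : seq (lat n)) (c : lat n -> k) : uniq s ->
  (forall m, m \in s -> S m) -> \sum_(m <- s) c m *: chi m = 0 ->
  forall m, m \in s -> c m = 0.
Proof. by case: chi_basis => _ _ _; apply. Qed.

Lemma chi_scale_inj m a b : S m -> a *: chi m = b *: chi m -> a = b.
Proof.
move=> Sm eq_ab; apply/eqP; rewrite -subr_eq0; apply/eqP.
apply: (@chi_free [:: m] (fun _ => a - b) _ _ _ m) => //; last by rewrite mem_seq1.
  by move=> x; rewrite inE => /eqP ->.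
by rewrite big_seq1 scalerBl eq_ab subrr.
Qed.

Lemma chi_nz m : S m -> chi m != 0.
Proof.
move=> Sm; apply/eqP => chi0; have := @chi_scale_inj m 1 0 Sm.
by rewrite chi0 !scaler0 => /(_ erefl) /eqP; rewrite oner_eq0.
Qed.

Lemma dcoef_spec i m : exists c : k,
  S m -> D i (chi m) = c *: chi (m + e *+ i) /\ (c != 0 -> S (m + e *+ i)).
Proof.
case: (classic (S m)) => Sm; last by exists 0.
have m_piece : in_piece S chi m (chi m).
  by left; split => //; exists 1; rewrite scale1r.
case: (D_hom i m_piece) => [[S' [c ->]]|[_ ->]]; first by exists c.
by exists 0 => _; rewrite scale0r eqxx.
Qed.

Definition dcoef i m : k :=
  proj1_sig (constructive_indefinite_description _ (dcoef_spec i m)).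

Lemma dcoefP i m : S m -> D i (chi m) = dcoef i m *: chi (m + e *+ i).
Proof.
by move=> Sm; case: (proj2_sig (constructive_indefinite_description _ (dcoef_spec i m)) Sm).
Qed.

Lemma dcoef_dual i m : S m -> dcoef i m != 0 -> S (m + e *+ i).
Proof.
by move=> Sm; case: (proj2_sig (constructive_indefinite_description _ (dcoef_spec i m)) Sm).
Qed.

Lemma dcoef0 m : S m -> dcoef 0 m = 1.
Proof.
move=> Sm; have := dcoefP 0 Sm; rewrite mulr0n addr0; case: D_LFIHD => _ D0 _ _ _.
by rewrite D0 => chiE; apply/esym/(chi_scale_inj Sm); rewrite -chiE scale1r.
Qed.

Lemma dcoef_ker i m : S m -> D i (chi m) = 0 -> dcoef i m = 0.
Proof.
move=> Sm; rewrite dcoefP // => /eqP; rewrite scaler_eq0 => /orP [/eqP //|chi0].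
have [//|c_nz] := eqVneq (dcoef i m) 0.
by move: chi0; rewrite (negbTE (chi_nz (dcoef_dual Sm c_nz))).
Qed.

Lemma dcoef_finite m : S m -> exists r, forall i, (r <= i)%N -> dcoef i m = 0.
Proof.
move=> Sm; case: D_LFIHD => _ _ _ D_fin _; have [r r_van] := D_fin (chi m).
by exists r => i ri; apply: dcoef_ker => //; apply: r_van.
Qed.

Lemma leibniz_term i (j : 'I_i.+1) m m' : S m -> S m' ->
  D j (chi m) * D (i - j) (chi m') =
    (dcoef j m * dcoef (i - j) m') *: chi (m + m' + e *+ i).
Proof.
move=> Sm Sm'; rewrite !dcoefP // -scalerAl -scalerAr scalerA.
have [->|] := eqVneq (dcoef j m * dcoef (i - j) m') 0; first by rewrite !scale0r.
rewrite mulf_eq0 negb_or => /andP [c_nz c'_nz].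
case: chi_basis => _ chiD _ _; rewrite -chiD; try by apply: dcoef_dual.
by rewrite addrACA -mulrnDr subnKC // -ltnS ltn_ord.
Qed.

Lemma dcoefD i m m' : S m -> S m' ->
  dcoef i (m + m') = \sum_(j < i.+1) dcoef j m * dcoef (i - j) m'.
Proof.
move=> Sm Sm'; have Smm' := in_dualMD Sm Sm'.
have [Sd|nSd] := classic (S (m + m' + e *+ i)).
  apply: (chi_scale_inj Sd); rewrite -dcoefP //.
  case: chi_basis => _ chiD _ _; rewrite chiD //.
  case: D_LFIHD => _ _ D_mul _ _; rewrite D_mul scaler_suml.
  by apply: eq_bigr => j _; exact: leibniz_term Sm Sm'.
have -> : dcoef i (m + m') = 0.
  by apply/eqP; apply: contraT => c_nz; case: nSd; apply: dcoef_dual.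
apply/esym/big1 => j _; apply/eqP; apply: contraT.
rewrite mulf_eq0 negb_or => /andP [c_nz c'_nz].
case: nSd; have := in_dualMD (dcoef_dual Sm c_nz) (dcoef_dual Sm' c'_nz).
by rewrite addrACA -mulrnDr subnKC // -ltnS ltn_ord.
Qed.

Lemma dpoly_spec m : exists p : {poly k}, S m -> forall i, p`_i = dcoef i m.
Proof.
case: (classic (S m)) => Sm; last by exists 0.
have [r r_van] := dcoef_finite Sm; exists (\poly_(i < r) dcoef i m) => _ i.
by rewrite coef_poly; case: ltnP => // ri; rewrite r_van.
Qed.

Definition dpoly m : {poly k} :=
  proj1_sig (constructive_indefinite_description _ (dpoly_spec m)).

Lemma coef_dpoly m i : S m -> (dpoly m)`_i = dcoef i m.
Proof.
by move=> Sm; apply: (proj2_sig (constructive_indefinite_description _ (dpoly_spec m)) Sm).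
Qed.

Lemma dpoly_nz m : S m -> dpoly m != 0.
Proof.
move=> Sm; apply/eqP => p0; have := coef_dpoly 0 Sm.
by rewrite p0 coef0 dcoef0 // => /eqP; rewrite eq_sym oner_eq0.
Qed.

Lemma dpolyD m m' : S m -> S m' -> dpoly (m + m') = dpoly m * dpoly m'.
Proof.
move=> Sm Sm'; apply/polyP => i.
rewrite coefM (coef_dpoly _ (in_dualMD Sm Sm')) dcoefD //.
by apply: eq_bigr => j _; rewrite !coef_dpoly.
Qed.

(* ddeg m is the largest i with D i (chi m) != 0. *)
Definition ddeg m : nat := (size (dpoly m)).-1.

Lemma ddegD m m' : S m -> S m' -> ddeg (m + m') = (ddeg m + ddeg m')%N.
Proof.
move=> Sm Sm'; rewrite /ddeg dpolyD // size_mul ?dpoly_nz //.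
have := dpoly_nz Sm; have := dpoly_nz Sm'; rewrite -!size_poly_eq0.
by case: (size (dpoly m)) => // a; case: (size (dpoly m')) => // b _ _ /=; rewrite addnS.
Qed.

Lemma dcoef_ddeg m : S m -> dcoef (ddeg m) m != 0.
Proof. by move=> Sm; rewrite -coef_dpoly // -lead_coefE lead_coef_eq0 dpoly_nz. Qed.

Lemma dcoef_gt_ddeg m i : S m -> (ddeg m < i)%N -> dcoef i m = 0.
Proof.
move=> Sm lt_di; rewrite -coef_dpoly //; apply: nth_default.
by move: lt_di; rewrite /ddeg; case: (size (dpoly m)).
Qed.

Lemma ddeg0_ker m i : S m -> ddeg m = 0%N -> (0 < i)%N -> D i (chi m) = 0.
Proof. by move=> Sm d0 i_gt0; rewrite dcoefP // dcoef_gt_ddeg ?d0 // scale0r. Qed.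

(* The top derivative chi (m + ddeg m e) of chi m has degree 0: otherwise
   iterativity D j (D d (chi m)) = binom * D (j + d) (chi m) would give a
   nonzero value beyond the degree of chi m. *)
Lemma ddeg_top m : S m -> S (m + e *+ ddeg m) /\ ddeg (m + e *+ ddeg m) = 0%N.
Proof.
move=> Sm; set d := ddeg m.
have Std := dcoef_dual Sm (dcoef_ddeg Sm); split => //.
have [//|j_gt0] := posnP (ddeg (m + e *+ d)).
have cj_nz := dcoef_ddeg Std; set j := ddeg (m + e *+ d) in j_gt0 cj_nz.
case: D_LFIHD => _ _ _ _ D_iter.
have := D_iter j d (chi m).
rewrite dcoefP // D_scale dcoefP // scalerA dcoefP //.
rewrite (@dcoef_gt_ddeg m (j + d)) //; last by rewrite -[X in (X < _)%N]add0n ltn_add2r.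
rewrite scale0r mul0rn => /eqP; rewrite scaler_eq0 mulf_eq0.
by rewrite (negbTE (dcoef_ddeg Sm)) (negbTE cj_nz) (negbTE (chi_nz (dcoef_dual Std cj_nz))).
Qed.
End HomogeneousLFIHD.

(* Using an m0 in the interior of
   sigma^vee, every x of M is brought into S by adding a multiple of
   shift = (1 + |gens|_1) m0 proportional to its l1-norm; the map
   x |-> dg (x + T shift) - T dg shift does not depend on T and is additive
   on all of M, hence given by its values on the unit vectors. *)
Section AdditiveIsLinear.
Variables (n : nat) (gens : seq (lat n)) (dg : lat n -> nat) (m0 : lat n).
Local Notation S := (in_dualM gens).
Hypothesis m0_pos : forall g, g \in gens -> g != 0 -> 0 < pairZ m0 g.
Hypothesis dgD : forall m m', S m -> S m' -> dg (m + m') = (dg m + dg m')%N.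

Definition l1norm (x : lat n) : int := \sum_i `|x 0 i|.
Definition gens_norm : int := \sum_(g <- gens) l1norm g.
Definition shift : lat n := m0 *+ (`|gens_norm|%N).+1.

Lemma l1norm_ge0 x : 0 <= l1norm x.
Proof. by apply: sumr_ge0 => i _; exact: normr_ge0. Qed.

Lemma gens_norm_ge0 : 0 <= gens_norm.
Proof. by apply: sumr_ge0 => i _; exact: l1norm_ge0. Qed.

Lemma l1norm0 : l1norm 0 = 0.
Proof. by apply: big1 => i _; rewrite mxE normr0. Qed.

Lemma l1normD x y : l1norm (x + y) <= l1norm x + l1norm y.
Proof. by rewrite /l1norm -big_split; apply: ler_sum => i _; rewrite mxE ler_normD. Qed.

Lemma pair_gen_bound x g : g \in gens -> `|pairZ x g| <= l1norm x * gens_norm.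
Proof.
move=> g_gens; apply: (le_trans (ler_norm_sum _ _ _)).
rewrite /l1norm mulr_suml; apply: ler_sum => i _.
rewrite normrM ler_wpM2l ?normr_ge0 //.
apply: (@le_trans _ _ (l1norm g)).
  by rewrite /l1norm (bigD1 i) //= lerDl; apply: sumr_ge0 => j _; exact: normr_ge0.
by rewrite /gens_norm (big_rem _ g_gens) /= lerDl; apply: sumr_ge0 => j _; exact: l1norm_ge0.
Qed.

Lemma shift_into_dual x (T : nat) : l1norm x <= T%:Z -> S (x + shift *+ T).
Proof.
move=> x_le_T; apply/in_dualM_gens => g g_gens.
rewrite pairZDl /shift !pairZMnl -mulrnA.
have [->|g_nz] := eqVneq g 0; first by rewrite !pairZ0r mul0rn addr0.
have m0g_gt0 := m0_pos g_gens g_nz.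
have xg_ge : - (l1norm x * gens_norm) <= pairZ x g.
  by rewrite lerNl; apply: le_trans (pair_gen_bound x g_gens); rewrite -normrN ler_norm.
have shift_coef : ((`|gens_norm|%N).+1%:R : int) = gens_norm + 1.
  by rewrite -addn1 natrD natz gez0_abs // gens_norm_ge0.
rewrite -mulr_natr natrM shift_coef natz.
have Tx : l1norm x * gens_norm <= T%:Z * gens_norm.
  by apply: ler_wpM2r => //; exact: gens_norm_ge0.
have m0g : (gens_norm + 1) * T%:Z <= pairZ m0 g * ((gens_norm + 1) * T%:Z).
  by rewrite ler_peMl //; apply: mulr_ge0 => //; have := gens_norm_ge0; lia.
have := gens_norm_ge0; lia.
Qed.

Lemma shift_dual : S shift.
Proof. by have := @shift_into_dual 0 1; rewrite l1norm0 add0r mulr1n; apply. Qed.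

Lemma dg0 : dg 0 = 0%N.
Proof. by have := dgD (@in_dualM0 n gens) (@in_dualM0 n gens); rewrite addr0; lia. Qed.

Lemma dgMn y j : S y -> dg (y *+ j) = (dg y * j)%N.
Proof.
move=> Sy; elim: j => [|j IH]; first by rewrite mulr0n dg0 muln0.
by rewrite mulrS dgD ?IH ?mulnS //; apply: in_dualMMn.
Qed.

Definition dg_ext x : int :=
  (dg (x + shift *+ `|l1norm x|%N))%:Z - (`|l1norm x|%N)%:Z * (dg shift)%:Z.

Lemma dg_extE x (T : nat) : l1norm x <= T%:Z ->
  dg_ext x = (dg (x + shift *+ T))%:Z - T%:Z * (dg shift)%:Z.
Proof.
move=> x_le_T; have := l1norm_ge0 x => x_ge0.
have le_T0T : (`|l1norm x|%N <= T)%N by lia.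
rewrite /dg_ext; set T0 := `|l1norm x|%N in le_T0T *.
have x_le_T0 : l1norm x <= T0%:Z by rewrite /T0; lia.
rewrite -(subnKC le_T0T) mulrnDr addrA.
rewrite (dgD (shift_into_dual x_le_T0) (in_dualMMn _ shift_dual)).
by rewrite dgMn; [nia | exact: shift_dual].
Qed.

Lemma dg_extD x y : dg_ext (x + y) = dg_ext x + dg_ext y.
Proof.
have := l1norm_ge0 x; have := l1norm_ge0 y => y_ge0 x_ge0.
set Tx := `|l1norm x|%N; set Ty := `|l1norm y|%N.
have x_le : l1norm x <= Tx%:Z by rewrite gez0_abs.
have y_le : l1norm y <= Ty%:Z by rewrite gez0_abs.
rewrite (dg_extE (T := (Tx + Ty)%N)); last first.
  by apply: (le_trans (l1normD x y)); rewrite PoszD lerD.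
rewrite (dg_extE x_le) (dg_extE y_le) mulrnDr addrACA.
by rewrite (dgD (shift_into_dual x_le) (shift_into_dual y_le)); nia.
Qed.

Lemma dg_ext_additive : additive dg_ext.
Proof.
have dg_ext0 : dg_ext 0 = 0 by have := dg_extD 0 0; rewrite addr0; lia.
move=> x y; have := dg_extD (x - y) y; rewrite subrK.
have := dg_extD y (- y); rewrite subrr dg_ext0; lia.
Qed.

HB.instance Definition _ := GRing.isAdditive.Build (lat n) int dg_ext dg_ext_additive.

Lemma dg_extZ (z : int) x : dg_ext (z *: x) = z * dg_ext x.
Proof. by rewrite -[z in z *: x]intz scaler_int raddfMz -mulrzl intz. Qed.

Lemma dg_ext_dual m : S m -> dg_ext m = (dg m)%:Z.
Proof.
move=> Sm; have m_le : l1norm m <= (`|l1norm m|%N)%:Z.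
  by have := l1norm_ge0 m; lia.
rewrite (dg_extE m_le) dgD //; last exact: in_dualMMn _ shift_dual.
by rewrite dgMn; [rewrite PoszD !PoszM; ring | exact: shift_dual].
Qed.

Lemma additive_is_linear : exists v, forall m, S m -> (dg m)%:Z = pairZ m v.
Proof.
exists (\row_j dg_ext (delta_mx 0 j)) => m Sm.
rewrite -dg_ext_dual // {1}(matrix_sum_delta m) big_ord1 raddf_sum /pairZ.
by apply: eq_bigr => j _; rewrite /= dg_extZ mxE.
Qed.
End AdditiveIsLinear.

Section KernelAndRoot.
Variables (k : fieldType) (n : nat) (gens : seq (lat n)) (A : comAlgType k)
  (chi : lat n -> A) (D : nat -> A -> A) (e : lat n).
Local Notation S := (in_dualM gens).
Hypothesis chi_basis : is_semigroup_algebra S chi.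
Hypothesis D_LFIHD : is_LFIHD D.
Hypothesis D_hom : homogeneous_of_degree S chi D e.
Local Notation dg := (ddeg chi_basis D_LFIHD D_hom).
Local Notation dc := (dcoef D_hom).

Lemma kernel_of_ddeg0 (s : seq (lat n)) (c : lat n -> k) :
  (forall m, m \in s -> S m /\ dg m = 0%N) -> in_kernel D (\sum_(m <- s) c m *: chi m).
Proof.
move=> s_deg0 i i_gt0; rewrite (D_sum D_LFIHD); apply: big1_seq => m /s_deg0 [Sm dm0].
by rewrite (D_scale D_LFIHD) (ddeg0_ker Sm dm0 i_gt0) scaler0.
Qed.

Lemma chi_expansion f : exists (s : seq (lat n)) (c : lat n -> k),
  [/\ uniq s, forall m, m \in s -> S m & f = \sum_(m <- s) c m *: chi m].
Proof.
case: chi_basis => _ _ chi_span _; have [s [c [s_dual ->]]] := chi_span f.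
exists (undup s), (fun m => c m *+ count_mem m s); split; rewrite ?undup_uniq //.
  by move=> m; rewrite mem_undup; apply: s_dual.
rewrite -big_undup_iterop_count; apply: eq_bigr => m _.
by rewrite Monoid.iteropE iter_addr_0 scalerMnl.
Qed.

Lemma D_coords (s : seq (lat n)) (c : lat n -> k) i : uniq s ->
  (forall m, m \in s -> S m) -> D i (\sum_(m <- s) c m *: chi m) = 0 ->
  forall m, m \in s -> c m * dc i m = 0.
Proof.
move=> s_uniq s_dual D0 m m_s; apply/eqP; apply: contraT => cm_nz.
pose sh := fun m => m + e *+ i.
set s2 := [seq m <- s | c m * dc i m != 0].
have m_s2 : m \in s2 by rewrite mem_filter cm_nz m_s.
have D_expand : D i (\sum_(m <- s) c m *: chi m) =
    \sum_(m' <- map sh s2) (c (m' - e *+ i) * dc i (m' - e *+ i)) *: chi m'.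
  rewrite big_map (D_sum D_LFIHD) big_filter [in RHS]big_rmcond_in.
    apply: eq_big_seq => x x_s.
    by rewrite (D_scale D_LFIHD) (dcoefP D_hom _ (s_dual x x_s)) scalerA /sh addrK.
  by move=> x _; rewrite negbK /sh addrK => /eqP ->; rewrite scale0r.
have sh_uniq : uniq (map sh s2) by rewrite (map_inj_uniq (addIr _)) filter_uniq.
have sh_dual m' : m' \in map sh s2 -> S m'.
  move=> /mapP [x]; rewrite mem_filter mulf_eq0 negb_or => /andP [/andP [_ dx] x_s] ->.
  exact: dcoef_dual (s_dual x x_s) dx.
have := chi_free chi_basis sh_uniq sh_dual (esym (etrans (esym D0) D_expand)) (map_f _ m_s2).
by rewrite /sh addrK => cm0; rewrite cm0 eqxx in cm_nz.
Qed.

Lemma kernel_ddeg0 f : in_kernel D f -> exists (s : seq (lat n)) (c : lat n -> k),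
  (forall m, m \in s -> S m /\ dg m = 0%N) /\ f = \sum_(m <- s) c m *: chi m.
Proof.
have [s [c [s_uniq s_dual ->]]] := chi_expansion f; move=> f_ker.
exists [seq m <- s | c m != 0], c; split; last first.
  rewrite big_filter [in RHS]big_rmcond // => m.
  by rewrite negbK => /eqP ->; rewrite scale0r.
move=> m; rewrite mem_filter => /andP [cm_nz m_s]; split; first exact: s_dual.
have [//|dm_gt0] := posnP (dg m).
have := D_coords s_uniq s_dual (f_ker _ dm_gt0) m_s.
by move/eqP; rewrite mulf_eq0 (negbTE cm_nz) (negbTE (dcoef_ddeg chi_basis D_LFIHD D_hom (s_dual m m_s))).
Qed.

Hypothesis D_nontriv : ~ trivial_LFIHD D.

Lemma exists_ddeg_pos : exists m, S m /\ (0 < dg m)%N.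
Proof.
apply: NNPP => no_pos; apply: D_nontriv => f.
case: chi_basis => _ _ chi_span _; have [s [c [s_dual ->]]] := chi_span f.
apply: kernel_of_ddeg0 => m m_s; split; first exact: s_dual.
have [//|dm_gt0] := posnP (dg m).
by case: no_pos; exists m; split => //; apply: s_dual.
Qed.

(* From now on dg is given by the pairing with v (lemma additive_is_linear),
   and m0 is an interior point of sigma^vee (lemma gordan). *)
Variables (m0 v : lat n).
Hypothesis sc : strongly_convex gens.
Hypothesis m0_dual : S m0.
Hypothesis m0_pos : forall g, g \in gens -> g != 0 -> 0 < pairZ m0 g.
Hypothesis dgE : forall m, S m -> (dg m)%:Z = pairZ m v.

(* <e, v> = -1: the top derivative of chi m (m of degree d > 0) has degree
   d + d <e, v> = 0. *)
Lemma pair_e_v : pairZ e v = -1.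
Proof.
have [m [Sm dm_gt0]] := exists_ddeg_pos.
have [Stop dtop0] := ddeg_top chi_basis D_LFIHD D_hom Sm.
have := dgE Stop; rewrite dtop0 pairZDl pairZMnl -dgE // -mulr_natr.
have : 0 < ((dg m)%:R : int) by rewrite ltr0n.
set d := dg m; set x := pairZ e v; nia.
Qed.

Lemma v_nz : v != 0.
Proof. by apply/eqP => v0; have := pair_e_v; rewrite v0 pairZ0r. Qed.

Lemma v_cone : in_cone gens (toQ v).
Proof. by apply: dual_dual => m Sm; rewrite pairQ_toQ -dgE // ler0z. Qed.

Lemma v_primitive : primitive v.
Proof.
move=> d w vE; have := pair_e_v; rewrite vE pairZZr => /(congr1 Num.norm).
rewrite normrM normrN normr1 => /eqP; rewrite -[_ == 1]/(_ == 1%:Z).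
by rewrite -!abszE -PoszM eqz_nat muln_eq1 => /andP [/eqP d1 _]; lia.
Qed.

Lemma top_shift_dual m : S m -> S (m + e *+ dg m).
Proof.
move=> Sm; have [->|dm_gt0] := posnP (dg m); first by rewrite mulr0n addr0.
by case: (ddeg_top chi_basis D_LFIHD D_hom Sm).
Qed.

(* The transpose of m |-> m + <m, v> e on N_Q; it preserves sigma and kills v. *)
Definition twist (w : latQ n) : latQ n := w + pairQ (toQ e) w *: toQ v.

Lemma pairQ_twist m w : S m ->
  pairQ (toQ m) (twist w) = pairQ (toQ (m + e *+ dg m)) w.
Proof.
move=> Sm; rewrite /twist pairQDr pairQZr pairQ_toQ -dgE // toQD toQMn.
by rewrite pairQDl pairQMnl -mulr_natr mulrC -pmulrn.
Qed.

Lemma twist_cone w : in_cone gens w -> in_cone gens (twist w).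
Proof.
by move=> w_cone; apply: dual_dual => m Sm; rewrite pairQ_twist //; apply: top_shift_dual.
Qed.

Lemma twistZ t w : twist (t *: w) = t *: twist w.
Proof. by rewrite /twist pairQZr scalerDr scalerA. Qed.

Lemma twist_v : twist (toQ v) = 0.
Proof. by rewrite /twist pairQ_toQ pair_e_v scaleN1r subrr. Qed.

Lemma twist_ker w : in_cone gens w -> twist w = 0 ->
  exists t : rat, 0 <= t /\ w = t *: toQ v.
Proof.
move=> w_cone /eqP; rewrite /twist addr_eq0 -scaleNr => /eqP wE.
exists (- pairQ (toQ e) w); split => //; rewrite leNgt; apply/negP => t_neg.
have : in_cone gens (- toQ v).
  have -> : - toQ v = (- (- pairQ (toQ e) w)^-1) *: w.
    by rewrite {2}wE scalerA mulNr mulVf ?lt_eqF // scaleN1r.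
  by apply: in_coneZ => //; rewrite oppr_ge0 invr_le0 ltW.
by move/(sc v_cone)/eqP; rewrite toQ_eq0 (negbTE v_nz).
Qed.

(* Q_{>=0} v is the face of sigma cut out by the image of m0 under the shift. *)
Lemma v_ray : is_ray gens v.
Proof.
split; first exact: v_primitive.
exists (toQ (m0 + e *+ dg m0)); split; first exact: top_shift_dual.
move=> w; split => [[w_cone w_face]|[t [t_ge0 ->]]].
  apply: twist_ker => //; apply: (cone_zero m0_dual m0_pos (twist_cone w_cone)).
  by rewrite pairQ_twist.
split; first exact: in_coneZ v_cone.
by rewrite pairQZr -pairQ_twist // twist_v pairQ0r mulr0.
Qed.

Lemma kernel_face f : in_kernel D f <-> in_face_algebra gens chi v f.
Proof.
split => [/kernel_ddeg0 [s [c [s_deg0 ->]]]|[s [c [s_face ->]]]].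
  exists s, c; split => // m /s_deg0 [Sm dm0]; split => //.
  by rewrite -dgE // dm0.
apply: kernel_of_ddeg0 => m /s_face [Sm mv0]; split => //.
by apply/eqP; rewrite -(eqz_nat _ 0) dgE // mv0.
Qed.

(* Any other ray rho' pairs nonnegatively with e: otherwise twist rho', which
   lies in the face of rho', would force v into that face, so twist rho' = 0
   and rho' = -<e, rho'> v, contradicting primitivity. *)
Lemma other_ray_nonneg rho' : is_ray gens rho' -> rho' <> v -> 0 <= pairZ e rho'.
Proof.
move=> [rho'_prim [u' [u'_dual face']]] rho'_ne; rewrite leNgt; apply/negP => z_lt0.
set z := pairZ e rho' in z_lt0.
have [rho'_cone u'rho'] : in_cone gens (toQ rho') /\ pairQ u' (toQ rho') = 0.
  by apply/face'; exists 1; rewrite scale1r ler01.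
have rho'E : toQ rho' = twist (toQ rho') + (- z)%:~R *: toQ v.
  by rewrite /twist pairQ_toQ -/z intrN scaleNr addrK.
have u'v : pairQ u' (toQ v) = 0.
  have := u'_dual _ (twist_cone rho'_cone); have := u'_dual _ v_cone.
  have nz_gt0 : 0 < ((- z)%:~R : rat) by rewrite ltr0z oppr_gt0.
  move: u'rho'; rewrite {1}rho'E pairQDr pairQZr; nra.
have [t [t_ge0 vE]] := (face' (toQ v)).1 (conj v_cone u'v).
have t_nz : t != 0.
  by apply: contra_neq v_nz => t0; apply/eqP; rewrite -toQ_eq0 vE t0 scale0r.
have twist0 : twist (toQ rho') = 0.
  by apply/eqP; have := twist_v; rewrite vE twistZ => /eqP; rewrite scaler_eq0 (negbTE t_nz).
move: rho'E; rewrite twist0 add0r -toQZ => /toQ_inj rho'_v.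
case: (rho'_prim _ _ rho'_v) => d1; first by apply: rho'_ne; rewrite rho'_v d1 scale1r.
by move: z_lt0; rewrite /z rho'_v pairZZr d1 pair_e_v.
Qed.
End KernelAndRoot.

Unset Implicit Arguments.
Theorem lemma5p4p3 (k : fieldType) (n : nat) (gens : seq (lat n))
    (A : comAlgType k) (chi : lat n -> A) (D : nat -> A -> A) (e : lat n) :
  nonzero_cone gens -> strongly_convex gens ->
  is_semigroup_algebra (in_dualM gens) chi ->
  is_LFIHD D -> ~ trivial_LFIHD D ->
  homogeneous_of_degree (in_dualM gens) chi D e ->
  exists rho : lat n,
    is_ray gens rho /\
    (forall f : A, in_kernel D f <-> in_face_algebra gens chi rho f) /\
    demazure_root_with gens e rho.
Proof.
move=> _ sc chi_basis D_LFIHD D_nontriv D_hom.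
have [m0 [m0_dual m0_pos]] := gordan sc.
have [v dgE] := additive_is_linear m0_pos (ddegD chi_basis D_LFIHD D_hom).
have v_is_ray := v_ray D_nontriv sc m0_dual m0_pos dgE.
have ev := pair_e_v D_nontriv dgE.
have others := other_ray_nonneg D_nontriv dgE.
exists v; split => //; split; first exact: kernel_face dgE.
by split => //; split.
Qed.
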